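(* Let $d\ge1$ and $n=2d+1$. (i) If $(0,g)$ is $d$-good for $\gamma(B_{n-2})$, then $(0,g)$ is also $d$-good for $\gamma(B_{n-1})$. (ii) If $(0,g)$ is $(d+1)$-good for $\gamma(B_{n-1})$, then $(0,g)$ is also $(d+1)$-good for $\gamma(B_n)$.
   Context: $B_n$ is the group of signed permutations of $\{\pm1,\dots,\pm n\}$; with $\sigma_0=0$, $\mathrm{des}_B(\sigma)=|\{i\in\{0,\dots,n-1\}:\sigma_i>\sigma_{i+1}\}|$, $B_n(t)=\sum_{\sigma\in B_n}t^{\mathrm{des}_B(\sigma)}=\sum_{i=0}^{\lfloor n/2\rfloor}\gamma_i(B_n)t^i(1+t)^{n-2i}$, and $\gamma(B_n)=(\gamma_0(B_n),\dots,\gamma_{\lfloor n/2\rfloor}(B_n))$. A simplicial complex is $k$-colorable if its vertices can be colored with $k$ colors so that every face has distinctly colored vertices; a $k$-FFK-vector is the $f$-vector $(f_0,f_1,\dots)$ ($f_i$ = number of faces with $i$ vertices, $f_0=1$) of some $k$-colorable complex. Vectors of different lengths are compared and added after padding with zeros on the right. Goodness: let $f=(f_0,\dots,f_m)$ be a vector of nonnegative integers and $g=(g_1,\dots,g_\ell)$. (a) $(0,g)$ is $(m+1)$-good for $f$ if $\ell=m+1$, $g_{m+1}\ne0$, and there are $m$-FFK-vectors $f^{(1)},\dots,f^{(k)}$, each of the form $(f^{(j)}_0,\dots,f^{(j)}_m)$ with $f^{(j)}_i\le f_i$ for all $i$, such that $g_{i+1}=\sum_j f^{(j)}_i$ for $0\le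 i\le m$. (b) $(0,g)$ is $m$-good for $f$ if $\ell=m$, $g_m\neq0$, and there are $(m-1)$-FFK-vectors $f^{(1)},\dots,f^{(k)}$ of the form $(f^{(j)}_0,\dots,f^{(j)}_{m-1})$ with $f_i\ge(i+1)f^{(j)}_i$ for all $i,j$, such that $g_{i+1}=\sum_jf^{(j)}_i$ for $0\le i\le m-1$. Here $\gamma(B_{2d-1})$ has length $d$ and $\gamma(B_{2d}),\gamma(B_{2d+1})$ have length $d+1$. *)

From HB Require Import structures.
From mathcomp Require Import all_boot all_order all_algebra all_fingroup.
From Stdlib Require Import ClassicalEpsilon.
Set Implicit Arguments. Unset Strict Implicit. Unset Printing Implicit Defensive.
Import Order.TTheory GRing.Theory Num.Theory.

(* A signed permutation of {+-1,...,+-n} is encoded by a pair (s, p):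
   sigma_(j+1) = (-1)^(s j) * (p j + 1) for j : 'I_n (bijective encoding). *)
Definition signed_perm (n : nat) : finType :=
  ({ffun 'I_n -> bool} * {perm 'I_n})%type.

Definition sp_val n (x : signed_perm n) (j : 'I_n) : int :=
  ((-1) ^+ x.1 j * ((x.2 j).+1)%:Z)%R.

Definition sigmaB n (x : signed_perm n) (k : nat) : int :=
  nth 0%R (0%R :: [seq sp_val x j | j <- enum 'I_n]) k.

Definition desB n (x : signed_perm n) : nat :=
  count (fun i => (sigmaB x i.+1 < sigmaB x i)%R) (iota 0 n).

Definition Bpoly (n : nat) : {poly int} :=
  (\sum_(x : signed_perm n) 'X^(desB x))%R.

Definition is_gammaB (n : nat) (g : seq nat) : Prop :=
  size g = n./2.+1 /\
  Bpoly n = (\sum_(i < size g) (nth 0%N g i)%:R *: ('X^i * (1 + 'X) ^+ (n - 2 * i)))%R.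

Definition gammaB (n : nat) : seq nat :=
  epsilon (inhabits [::]) (is_gammaB n).

(* f (a finite sequence, padded with zeros on the right) is a k-FFK-vector:
   the f-vector (f_i = number of faces with i vertices) of a k-colorable
   simplicial complex K (containing the empty face, closed under subsets),
   vertex set 'I_N for some N. *)
Definition FFK (k : nat) (f : seq nat) : Prop :=
  exists (N : nat) (K : {set {set 'I_N}}) (c : 'I_N -> 'I_k),
    [/\ set0 \in K,
        (forall s t : {set 'I_N}, s \in K -> t \subset s -> t \in K),
        (forall s, s \in K -> {in s &, injective c}) &
        (forall i, nth 0 f i = #|[set s in K | #|s| == i]|)].

(* good L f g  :<->  (0,g) is L-good for f = (f_0,...,f_m) (m = size f - 1).
   Case (a): L = m+1;  case (b): L = m.  Indices padded with zeros. *)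
Definition good (L : nat) (f g : seq nat) : Prop :=
  (size f = L /\ size g = L /\ nth 0 g L.-1 != 0 /\
   exists fs : seq (seq nat),
     (forall fj, fj \in fs -> FFK L.-1 fj /\ forall i, nth 0 fj i <= nth 0 f i) /\
     (forall i, i <= L.-1 -> nth 0 g i = sumn [seq nth 0 fj i | fj <- fs]))
  \/
  (size f = L.+1 /\ size g = L /\ nth 0 g L.-1 != 0 /\
   exists fs : seq (seq nat),
     (forall fj, fj \in fs -> FFK L.-1 fj /\ forall i, i.+1 * nth 0 fj i <= nth 0 f i) /\
     (forall i, i <= L.-1 -> nth 0 g i = sumn [seq nth 0 fj i | fj <- fs])).

From mathcomp Require Import all_boot all_order all_algebra all_fingroup.
From mathcomp Require Import ring zify.
From Stdlib Require Import ClassicalEpsilon.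
Import Order.TTheory GRing.Theory Num.Theory.

(* Reading a signed permutation of [n+1] as one of [n] with the letter +-(n+1)
   inserted at one of n+1 places gives
     B_{n+1}(t) = (1 + (2n+1) t) B_n(t) + 2t(1-t) B_n'(t).
   On the basis t^i (1+t)^(n-2i) this becomes
     gamma_i(B_{n+1}) = (2i+1) gamma_i(B_n) + 4(n-2i+2) gamma_{i-1}(B_n),
   so gamma_i(B_{n+1}) >= (i+1) gamma_i(B_n).  Since gamma(B_{n-2}) has length d
   and gamma(B_{n-1}) length d+1, both hypotheses are goodness of type (a); the
   bounds f^(j)_i <= gamma_i(B_{n-2}) then yield the bounds
   (i+1) f^(j)_i <= gamma_i(B_{n-1}) of type (b), and bounds by gamma(B_{n-1})
   persist for gamma(B_n). *)

Fixpoint descents (s : seq int) : nat :=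
  if s is a :: ((b :: _) as t) then ((b < a)%R : nat) + descents t else 0.

Lemma count_descents (s : seq int) :
  count (fun i => (nth 0%R s i.+1 < nth 0%R s i)%R) (iota 0 (size s).-1) = descents s.
Proof.
elim: s => [|a [|b t] IH] //=.
move: IH => /= <-; rewrite -(addn0 1) iotaDl count_map.
by congr (_ + _); apply: eq_count.
Qed.

Definition signed_word {n} (x : signed_perm n) : seq int :=
  [seq sp_val x j | j <- enum 'I_n].

Lemma desB_descents {n} (x : signed_perm n) : desB x = descents (0%R :: signed_word x).
Proof. by rewrite -count_descents /= size_map size_enum_ord. Qed.

Definition insert_at (p : nat) (v : int) (w : seq int) := take p w ++ v :: drop p w.

Definition top_insertions (n : nat) : seq (nat * int) :=
  [seq (q, v) | q <- iota 0 n.+1, v <- [:: Posz n.+1; (- Posz n.+1)%R]].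

Fixpoint signed_words (n : nat) : seq (seq int) :=
  if n is n'.+1 then
    [seq insert_at qv.1 qv.2 w | w <- signed_words n', qv <- top_insertions n']
  else [:: [::]].

Lemma signed_wordsS n : signed_words n.+1 =
  [seq insert_at qv.1 qv.2 w | w <- signed_words n, qv <- top_insertions n].
Proof. by []. Qed.

Lemma size_signed_words n : size (signed_words n) = 2 ^ n * n`!.
Proof.
elim: n => [|n IH] //.
by rewrite signed_wordsS size_allpairs IH size_allpairs size_iota expnS factS /=; lia.
Qed.

Definition is_signed_word n (w : seq int) := perm_eq [seq absz x | x <- w] (iota 1 n).

Lemma signed_words_complete n w : is_signed_word n w -> w \in signed_words n.
Proof.
elim: n w => [|n IH] w w_signed.
  by move/perm_size: w_signed; case: w.
set m := [seq absz x | x <- w].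
have top_in_m : n.+1 \in m by rewrite (perm_mem w_signed) mem_iota; lia.
set p := index n.+1 m.
have p_lt : p < size w by rewrite -(size_map absz) index_mem.
set v := nth 0%R w p.
have abs_v : absz v = n.+1 by rewrite /v -(nth_map 0%R 0) // nth_index.
set w' := take p w ++ drop p.+1 w.
have size_take_p : size (take p w) = p by rewrite size_take p_lt.
have -> : w = insert_at p v w'.
  rewrite /insert_at /w' take_size_cat // drop_size_cat //.
  by rewrite -drop_nth // cat_take_drop.
have w'_signed : is_signed_word n w'.
  have m_split : m = take p m ++ n.+1 :: drop p.+1 m.
    by rewrite -{1}(cat_take_drop p m) (drop_nth 0) ?index_mem // nth_index.
  move: w_signed; rewrite /is_signed_word -/m {1}m_split -addn1 iotaD /= -cat1s perm_catCA /=.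
  rewrite add1n addn1 perm_sym -cat1s perm_catC /= perm_cons perm_sym.
  by rewrite /w' map_cat map_take map_drop.
have qv_in : (p, v) \in top_insertions n.
  apply: allpairs_f; last by case: v abs_v => k /= Hk; rewrite !inE ?NegzE Hk eqxx ?orbT.
  by rewrite mem_iota; move: p_lt; rewrite -(size_map absz) (perm_size w_signed) size_iota; lia.
rewrite signed_wordsS.
exact: (allpairs_f (fun w (qv : nat * int) => insert_at qv.1 qv.2 w) (IH _ w'_signed) qv_in).
Qed.

Lemma signed_word_is_signed_word {n} (x : signed_perm n) :
  is_signed_word n (signed_word x).
Proof.
have abs_sp j : absz (sp_val x j) = (x.2 j).+1.
  by rewrite /sp_val; case: (x.1 j); rewrite /= ?muln1 ?mul1n.
rewrite /is_signed_word /signed_word -map_comp (eq_map abs_sp).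
have -> : iota 1 n = [seq (val j).+1 | j <- enum 'I_n].
  by rewrite -(addn0 1) iotaDl -val_enum_ord -map_comp.
rewrite (map_comp (fun j : 'I_n => (val j).+1) x.2).
apply: perm_map; apply: uniq_perm; rewrite ?enum_uniq //.
  by rewrite map_inj_uniq ?enum_uniq //; apply: perm_inj.
by move=> j; rewrite mem_enum; apply/mapP; exists ((x.2)^-1 j)%g; rewrite ?mem_enum // permKV.
Qed.

Lemma signed_word_inj n : injective (@signed_word n).
Proof.
move=> [s1 p1] [s2 p2] /eq_in_map same_words.
have same_entries j : s1 j = s2 j /\ p1 j = p2 j.
  have := same_words j; rewrite mem_enum => /(_ isT); rewrite /sp_val /=.
  case: (s1 j); case: (s2 j); rewrite /= ?mul1r ?mulN1r => h; try lia.
    by split=> //; apply/val_inj; move/eqP: h; rewrite eqr_opp => /eqP [].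
  by split=> //; apply/val_inj; case: h.
by congr pair; [apply/ffunP | apply/permP] => j; case: (same_entries j).
Qed.

Lemma perm_signed_words n :
  perm_eq [seq signed_word x | x <- enum (signed_perm n)] (signed_words n).
Proof.
have uniq_words : uniq [seq signed_word x | x <- enum (signed_perm n)].
  by rewrite map_inj_uniq ?enum_uniq //; apply: signed_word_inj.
have sub_words : {subset [seq signed_word x | x <- enum (signed_perm n)] <= signed_words n}.
  by move=> w /mapP [x _ ->]; apply/signed_words_complete/signed_word_is_signed_word.
have size_words : size (signed_words n) <= size [seq signed_word x | x <- enum (signed_perm n)].
  by rewrite size_signed_words size_map -cardE card_prod card_ffun card_Sn card_bool card_ord.
apply: uniq_perm; rewrite ?(leq_size_uniq uniq_words sub_words size_words) //.
by have [] := uniq_min_size uniq_words sub_words size_words.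
Qed.

Lemma signed_words_bounded {n w} : w \in signed_words n ->
  size w = n /\ {in w, forall x, (- (n.+1)%:Z < x < (n.+1)%:Z)%R}.
Proof.
rewrite -(perm_mem (perm_signed_words n)) => /mapP [x _ ->].
have x_signed := signed_word_is_signed_word x.
split; first by rewrite -(size_map absz) (perm_size x_signed) size_iota.
move=> y y_in; have : absz y \in iota 1 n by rewrite -(perm_mem x_signed) map_f.
by rewrite mem_iota; case: y {y_in} => k /=; rewrite ?NegzE; lia.
Qed.

Lemma Bpoly_signed_words n :
  Bpoly n = (\sum_(w <- signed_words n) 'X^(descents (0%R :: w)))%R.
Proof.
rewrite /Bpoly -(perm_big _ (perm_signed_words n)) big_map -big_enum /=.
by apply: eq_bigr => x _; rewrite desB_descents.
Qed.

Local Open Scope ring_scope.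

Definition eulerB_step (n : nat) (p : {poly int}) : {poly int} :=
  p + ((2 * n + 1)%N)%:R * 'X * p + 2%:R * 'X * (1 - 'X) * p^`().

Lemma eulerB_step0 n : eulerB_step n 0 = 0.
Proof. by rewrite /eulerB_step deriv0; ring. Qed.

Lemma eulerB_stepD n p q : eulerB_step n (p + q) = eulerB_step n p + eulerB_step n q.
Proof. by rewrite /eulerB_step derivD; ring. Qed.

Lemma eulerB_step_sum n (I : Type) (r : seq I) (P : pred I) (F : I -> {poly int}) :
  eulerB_step n (\sum_(i <- r | P i) F i) = \sum_(i <- r | P i) eulerB_step n (F i).
Proof. exact: (big_morph _ (eulerB_stepD n) (eulerB_step0 n)). Qed.

Lemma eulerB_step_natmul n k p : eulerB_step n (k%:R * p) = k%:R * eulerB_step n p.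
Proof. by rewrite /eulerB_step derivM -polyC_natr derivC; ring. Qed.

Lemma eulerB_stepXn n k : eulerB_step n 'X^k =
  ((2 * k + 1)%N)%:R * 'X^k + (((2 * n + 1)%N)%:R - ((2 * k)%N)%:R) * 'X^(k.+1).
Proof.
rewrite /eulerB_step derivXn; case: k => [|k]; first by rewrite mulr0n !expr0; ring.
by rewrite -mulr_natl !exprS; ring.
Qed.

(* Inserting +-M between two letters adds a descent iff they form an ascent;
   at the end, +M adds no descent and -M adds one. *)
Lemma sum_descents_insert_extreme (M : int) a w :
  {in a :: w, forall x, - M < x < M} ->
  \sum_(q <- iota 0 (size w).+1)
     ('X^(descents (a :: insert_at q M w)) + 'X^(descents (a :: insert_at q (- M) w)))
  = eulerB_step (size w) 'X^(descents (a :: w)).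
Proof.
rewrite eulerB_stepXn.
elim: w a => [|b w IH] a bounded.
  have /andP [gtNa ltaM] := bounded a (mem_head _ _).
  rewrite big_seq1 /insert_at /= ltNge (ltW ltaM) gtNa /=; ring.
have /andP [gtNa ltaM] := bounded a (mem_head _ _).
have /andP [gtNb ltbM] : - M < b < M by apply: bounded; rewrite !inE eqxx orbT.
rewrite (_ : iota 0 _ = 0%N :: iota 1 (size w).+1) // big_cons (iotaDl 1 0) big_map.
under eq_bigr => q _ do
  rewrite add1n [descents _]/= [descents (a :: _)]/= !exprD -mulrDr.
rewrite -mulr_sumr IH => [|x x_in]; last by apply: bounded; rewrite inE x_in orbT.
rewrite /insert_at /= ltNge (ltW ltaM) gtNa ltbM ltNge (ltW gtNb) /=.
set k := descents (b :: w).
by case: (b < a) => /=; rewrite ?add0n ?add1n !exprS; ring.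
Qed.

Lemma Bpoly_succ n : Bpoly n.+1 = eulerB_step n (Bpoly n).
Proof.
rewrite !Bpoly_signed_words signed_wordsS big_allpairs_dep eulerB_step_sum.
apply: eq_big_seq => w w_in; have [size_w bounded] := signed_words_bounded w_in.
rewrite -[in eulerB_step n _]size_w -(sum_descents_insert_extreme (n.+1)%:Z); last first.
  by move=> x; rewrite inE => /orP [/eqP -> | /bounded //]; lia.
by rewrite /top_insertions big_allpairs_dep size_w; apply: eq_bigr => q _; rewrite big_cons big_seq1.
Qed.

Fixpoint gamma_coef (n i : nat) : nat :=
  if n is n'.+1 then
    ((2 * i + 1) * gamma_coef n' i +
     if i is j.+1 then 4 * (n' - 2 * j) * gamma_coef n' j else 0)%N
  else i == 0%N.

Lemma gamma_coef_eq0 n i : (n < 2 * i)%N -> gamma_coef n i = 0%N.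
Proof.
elim: n i => [|n IH] [|j] //= lt_n; rewrite IH; last lia.
by rewrite muln0 (_ : (n - 2 * j)%N = 0%N) ?muln0 //; lia.
Qed.

Definition gamma_basis (n i : nat) : {poly int} := 'X^i * (1 + 'X) ^+ (n - 2 * i).

Lemma eulerB_step_gamma_basis n i : (2 * i <= n)%N ->
  eulerB_step n (gamma_basis n i) =
  ((2 * i + 1)%N)%:R * gamma_basis n.+1 i + ((4 * (n - 2 * i))%N)%:R * gamma_basis n.+1 i.+1.
Proof.
move=> le_2i_n; have [m {le_2i_n}->] : exists m, n = (2 * i + m)%N by exists (n - 2 * i)%N; lia.
rewrite /gamma_basis /eulerB_step (_ : 2 * i + m - 2 * i = m)%N; last lia.
rewrite (_ : (2 * i + m).+1 - 2 * i = m.+1)%N; last lia.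
rewrite (_ : (2 * i + m).+1 - 2 * i.+1 = m.-1)%N; last lia.
rewrite derivM derivXn deriv_exp derivD derivX -polyC1 derivC polyC1 add0r mul1r.
rewrite -(mulr_natl _ i) -(mulr_natl _ m).
by case: i => [|i]; case: m => [|m]; rewrite /= ?expr0 ?exprS; ring.
Qed.

Lemma eulerB_step_gamma_sum n :
  eulerB_step n (\sum_(i < n.+1) (gamma_coef n i)%:R * gamma_basis n i) =
  \sum_(i < n.+2) (gamma_coef n.+1 i)%:R * gamma_basis n.+1 i.
Proof.
have step_term (i : 'I_n.+1) : eulerB_step n ((gamma_coef n i)%:R * gamma_basis n i) =
    ((2 * i + 1) * gamma_coef n i)%N%:R * gamma_basis n.+1 i
    + (4 * (n - 2 * i) * gamma_coef n i)%N%:R * gamma_basis n.+1 i.+1.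
  rewrite eulerB_step_natmul; case: (leqP (2 * i) n) => [le_2i_n | lt_n_2i].
    by rewrite eulerB_step_gamma_basis // !natrM; ring.
  by rewrite gamma_coef_eq0 // !muln0 !mul0r addr0.
rewrite eulerB_step_sum (eq_bigr _ (fun i _ => step_term i)) big_split /=.
under [RHS]eq_bigr => i _ do rewrite /= natrD mulrDl.
rewrite big_split /=; congr (_ + _).
  by rewrite [RHS]big_ord_recr /= (gamma_coef_eq0 n n.+1) ?muln0 ?mul0r ?addr0 //; lia.
by rewrite [RHS]big_ord_recl /= mul0r add0r; apply: eq_bigr.
Qed.

Lemma Bpoly_gamma n : Bpoly n = \sum_(i < n.+1) (gamma_coef n i)%:R * gamma_basis n i.
Proof.
elim: n => [|n IH]; last by rewrite Bpoly_succ IH eulerB_step_gamma_sum.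
by rewrite Bpoly_signed_words big_seq1 big_ord1 /gamma_basis /= expr0 mulr1 mul1r.
Qed.

(* Only the first basis element survives at 0; the others are 'X times a
   shorter basis of degree n - 2. *)
Lemma gamma_basis_free (s n : nat) (c : nat -> int) : (2 * s <= n.+2)%N ->
  \sum_(i < s) c i *: gamma_basis n i = 0 -> forall i, (i < s)%N -> c i = 0.
Proof.
elim: s n c => [|s IH] n c le_2s_n //; rewrite big_ord_recl /=.
have basis_succ (j : 'I_s) : gamma_basis n (bump 0 j) = 'X * gamma_basis (n - 2) j.
  rewrite /gamma_basis /bump /= add1n exprS -mulrA -subnDA.
  by congr (_ * (_ * _ ^+ _)); lia.
under eq_bigr => j _ do rewrite basis_succ scalerAr.
move=> sum0; have c0 : c 0%N = 0.
  move/(congr1 (horner^~ 0)): sum0; rewrite hornerD horner_sum hornerZ.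
  rewrite big1 => [|j _]; last by rewrite hornerM hornerX mul0r.
  by rewrite /gamma_basis !hornerE /= expr1n !mulr1.
move: sum0; rewrite c0 scale0r add0r -mulr_sumr => /eqP.
rewrite mulf_eq0 polyX_eq0 /= => /eqP sum0 [|i] lt_i //.
by apply: (IH (n - 2)%N (fun k => c k.+1)) => //; lia.
Qed.

Lemma is_gammaB_uniq n g1 g2 : is_gammaB n g1 -> is_gammaB n g2 -> g1 = g2.
Proof.
move=> [size_g1 Bpoly_g1] [size_g2 Bpoly_g2].
apply: (@eq_from_nth _ 0%N) => [|i]; first by rewrite size_g1 size_g2.
move: Bpoly_g2; rewrite Bpoly_g1 size_g1 size_g2 => /eqP; rewrite -subr_eq0 -sumrB.
under eq_bigr => j _ do rewrite -scalerBl.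
move=> /eqP sum0 lt_i; apply/eqP; rewrite -(eqr_nat int) -subr_eq0; apply/eqP.
have := gamma_basis_free _ _ (fun j => (nth 0%N g1 j)%:R - (nth 0%N g2 j)%:R) _ sum0.
by apply; lia.
Qed.

Lemma is_gammaB_gamma_coef n : is_gammaB n (mkseq (gamma_coef n) n./2.+1).
Proof.
split; first by rewrite size_mkseq.
rewrite Bpoly_gamma size_mkseq.
rewrite [RHS](big_ord_widen n.+1
  (fun i => (nth 0%N (mkseq (gamma_coef n) n./2.+1) i)%:R *: gamma_basis n i)); last lia.
rewrite [RHS]big_mkcond /=; apply: eq_bigr => i _; case: ifP => [lt_i | /negbT ge_i].
  by rewrite nth_mkseq // scaler_nat mulr_natl.
by rewrite gamma_coef_eq0 ?mul0r //; lia.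
Qed.

Lemma gammaBE n : gammaB n = mkseq (gamma_coef n) n./2.+1.
Proof.
apply: is_gammaB_uniq (is_gammaB_gamma_coef n).
exact: epsilon_spec (ex_intro _ _ (is_gammaB_gamma_coef n)).
Qed.

Local Close Scope ring_scope.

Lemma size_gammaB n : size (gammaB n) = n./2.+1.
Proof. by rewrite gammaBE size_mkseq. Qed.

Lemma nth_gammaB n i : nth 0 (gammaB n) i = gamma_coef n i.
Proof.
rewrite gammaBE; case: (ltnP i n./2.+1) => [lt_i | ge_i]; first by rewrite nth_mkseq.
by rewrite nth_default ?size_mkseq // gamma_coef_eq0 //; lia.
Qed.

Lemma gammaB_succ_ge n i : i.+1 * nth 0 (gammaB n) i <= nth 0 (gammaB n.+1) i.
Proof. by rewrite !nth_gammaB /=; apply: leq_trans (leq_addr _ _); rewrite leq_mul2r; lia. Qed.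

Lemma good_le L f f' g : size f' = size f -> (forall i, nth 0 f i <= nth 0 f' i) ->
  good L f g -> good L f' g.
Proof.
move=> size_f' le_f; rewrite /good size_f'.
case=> [] [? [? [? [fs [bounded sum_g]]]]]; [left | right]; do 3!split => //;
  exists fs; split => // fj /bounded [FFK_fj le_fj];
  by split => // i; apply: leq_trans (le_f i).
Qed.

Lemma good_lift L f f' g : size f = L -> size f' = L.+1 ->
  (forall i, i.+1 * nth 0 f i <= nth 0 f' i) -> good L f g -> good L f' g.
Proof.
move=> size_f size_f' le_f [[_ [? [? [fs [bounded sum_g]]]]] | [size_f_b _]]; last by lia.
right; do 3!split => //; exists fs; split => // fj /bounded [FFK_fj le_fj].
by split => // i; apply: leq_trans (le_f i); rewrite leq_mul2l le_fj orbT.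
Qed.

Theorem lemma2p5 (d n : nat) (hd : 1 <= d) (hn : n = 2 * d + 1) (g : seq nat) :
  (good d (gammaB (n - 2)) g -> good d (gammaB (n - 1)) g) /\
  (good d.+1 (gammaB (n - 1)) g -> good d.+1 (gammaB n) g).
Proof.
case: d hd hn => [//|d] _ ->.
have -> : 2 * d.+1 + 1 - 2 = 2 * d + 1 by lia.
have -> : 2 * d.+1 + 1 - 1 = (2 * d + 1).+1 by lia.
have -> : 2 * d.+1 + 1 = (2 * d + 1).+2 by lia.
split.
  by apply: good_lift => [||i]; rewrite ?size_gammaB; [lia | lia | exact: gammaB_succ_ge].
apply: good_le => [|i]; first by rewrite !size_gammaB; lia.
exact: leq_trans (leq_pmull _ (ltn0Sn i)) (gammaB_succ_ge _ _).
Qed.
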